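(* Let $e_1,e_2$ be composable forward events of the LTSI of CCSK$^{\mathrm P}$. Then $e_1<e_2$ if and only if $e_1\otimes e_2$.
   Context: Names $\mathsf N$ with bijection $\overline\cdot$ onto disjoint co-names; $\mathsf L=\mathsf N\cup\overline{\mathsf N}\cup\{\tau\}$ ($\alpha$ over $\mathsf L$, $\lambda$ over $\mathsf L\setminus\{\tau\}$); keys $\mathsf K$ denumerable. CCSK processes $X::=\mathbf 0\mid\alpha.X\mid X\backslash\lambda\mid X+Y\mid X|Y\mid\alpha[k].X$; $\mathrm{keys}(X)$ keys in $X$; standard means no keys. Directions $D\in\{\mathrm L,\mathrm R\}$, $\bar{\mathrm L}=\mathrm R$, $\bar{\mathrm R}=\mathrm L$. Proof keyed labels $\theta::=\upsilon\alpha[k]\mid\upsilon\langle\upsilon_1\lambda[k],\upsilon_2\overline\lambda[k]\rangle$ ($\upsilon,\upsilon_i\in\{|_{\mathrm L},|_{\mathrm R},+_{\mathrm L},+_{\mathrm R}\}^*$), $\ell(\upsilon\alpha[k])=\alpha$, $\ell(\upsilon\langle\cdots\rangle)=\tau$, $\mathrm{key}(\theta)=k$. Forward CCSK$^{\mathrm P}$ transitions: least relation closed under (act) $\alpha.X\xrightarrow{\alpha[k]}\alpha[k].X$ if $\mathrm{keys}(X)=\emptyset$; (pre) $X\xrightarrow\theta X',\mathrm{key}(\theta)\ne k\Rightarrow\alpha[k].X\xrightarrow\theta\alpha[k].X'$; (res) $X\xrightarrow\theta X',\ell(\theta)\notin\{\lambda,\overline\lambda\}\Rightarrow X\backslash\lambda\xrightarrow\theta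 X'\backslash\lambda$; (par) $X\xrightarrow\theta X',\mathrm{key}(\theta)\notin\mathrm{keys}(Y)\Rightarrow X|Y\xrightarrow{|_{\mathrm L}\theta}X'|Y$, $Y|X\xrightarrow{|_{\mathrm R}\theta}Y|X'$; (syn) $X\xrightarrow{\upsilon_1\lambda[k]}X',Y\xrightarrow{\upsilon_2\overline\lambda[k]}Y'\Rightarrow X|Y\xrightarrow{\langle\upsilon_1\lambda[k],\upsilon_2\overline\lambda[k]\rangle}X'|Y'$; (sum) $X\xrightarrow\theta X',\mathrm{keys}(Y)=\emptyset\Rightarrow X+Y\xrightarrow{+_{\mathrm L}\theta}X'+Y$, $Y+X\xrightarrow{+_{\mathrm R}\theta}Y+X'$. Backward transitions are converses; $\bar t$ the inverse. Paths: sequences of composable transitions; rooted if the source cannot perform a backward transition; only processes reachable from standard ones are considered. Connected: path from source of one to target of the other. Relations on proof labels (least closed under rules; ''prefix'' = form $\beta[k']$; $\theta_{\mathrm L},\theta_{\mathrm R}$ components of a synchronisation label): Connectivity $\frown$: (A1) $\alpha[k]\frown\theta$; (A2) $\theta\frown\alpha[k]$ if $\theta$ not a prefix; (P1) $|_D\theta\frown|_D\theta'$ if $\theta\frown\theta'$; (P2) $|_D\theta\frown|_{\bar D}\theta'$; (C1) $+_D\theta\frown+_D\theta'$ if $\theta\frown\theta'$; (C2) $+_D\theta\frown+_{\bar D}\theta'$; (S1) $|_D\theta\frown\langle\theta_{\mathrm L},\theta_{\mathrm R}\rangle$ if $\theta\frown\theta_D$; (S2) $\langle\theta_{\mathrm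 L},\theta_{\mathrm R}\rangle\frown|_D\theta$ if $\theta_D\frown\theta$; (S3) componentwise. Dependence $\otimes$: A1, A2, C1, C2, P1, S1, S2 with $\otimes$ for $\frown$; (P2$_k$) $|_D\theta\otimes|_{\bar D}\theta'$ if equal keys; (S3) $\langle\theta_1,\theta_2\rangle\otimes\langle\theta_1',\theta_2'\rangle$ if for some $i\ne j$, $\theta_i\otimes\theta_i'$ and $\theta_j\frown\theta_j'$. Independence $\iota$: C1, P1, S1, S2, S3 with $\iota$ for $\frown$, and (P2$_k$) $|_D\theta\mathrel\iota|_{\bar D}\theta'$ if keys differ. On transitions: $t\mathrel\iota u$ iff connected and labels $\iota$. Event equivalence $\sim$: smallest equivalence with $t\sim t'$ whenever $t:P\to Q$, $u:P\to R$, $u':Q\to S$, $t':R\to S$ ($u'$ with label/direction of $u$, $t'$ of $t$) and $t\mathrel\iota u$; events are classes $[t]$; forward events are classes of forward transitions; $\bar e=[\bar t]$. $\sharp(\varepsilon,e)=0$, $\sharp(tr,e)=\sharp(r,e)+1$ if $t\in e$, $-1$ if $t\in\bar e$, unchanged otherwise. For forward events, $e\le e'$ iff every rooted path $r$ with $\sharp(r,e')>0$ has $\sharp(r,e)>0$; $e<e'$ iff $e\le e'$ and $e\ne e'$. Events $e_1,e_2$ are composable if some $t_1\in e_1$ is composable with some $t_2\in e_2$; $e_1\otimes e_2$ iff some $t_1\in e_1$, $t_2\in e_2$ have labels satisfying $\otimes$. *)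

From Stdlib Require Import ZArith List ClassicalEpsilon.
Import ListNotations.
Open Scope Z_scope.

Inductive vis : Type := Nm (n : nat) | Co (n : nat).
Definition co (l : vis) : vis := match l with Nm n => Co n | Co n => Nm n end.
Inductive act : Type := Vis (l : vis) | Tau.
Definition key := nat.

Inductive proc : Type :=
| Nil
| Pref (a : act) (X : proc)
| Res (X : proc) (l : vis)
| Sum (X Y : proc)
| Par (X Y : proc)
| Keyed (a : act) (k : key) (X : proc).

Fixpoint haskey (k : key) (X : proc) : Prop :=
  match X with
  | Nil => False
  | Pref _ X => haskey k X
  | Res X _ => haskey k X
  | Sum X Y => haskey k X \/ haskey k Y
  | Par X Y => haskey k X \/ haskey k Y
  | Keyed _ k' X => k' = k \/ haskey k X
  end.
Definition nokeys (X : proc) : Prop := forall k, ~ haskey k X.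
Definition standard (X : proc) : Prop := nokeys X.

Inductive side : Type := SL | SR.
Definition flip (D : side) : side := match D with SL => SR | SR => SL end.

(** Proof keyed labels: Base a k = alpha[k]; PPar D th = |_D th;
    PSum D th = +_D th; Syn thL thR = <thL, thR>.  (A label
    upsilon<...> is PPar/PSum applied to a Syn.) *)
Inductive plabel : Type :=
| Base (a : act) (k : key)
| PPar (D : side) (th : plabel)
| PSum (D : side) (th : plabel)
| Syn (thL thR : plabel).

Fixpoint lab_act (th : plabel) : act :=
  match th with
  | Base a _ => a
  | PPar _ th => lab_act th
  | PSum _ th => lab_act th
  | Syn _ _ => Tau
  end.
Fixpoint lab_key (th : plabel) : key :=
  match th with
  | Base _ k => k
  | PPar _ th => lab_key th
  | PSum _ th => lab_key th
  | Syn thL _ => lab_key thL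
  end.
Fixpoint simple (th : plabel) : Prop :=
  match th with
  | Base _ _ => True
  | PPar _ th => simple th
  | PSum _ th => simple th
  | Syn _ _ => False
  end.
Definition is_prefix (th : plabel) : Prop :=
  match th with Base _ _ => True | _ => False end.
Definition comp (D : side) (thL thR : plabel) : plabel :=
  match D with SL => thL | SR => thR end.

Inductive fstep : proc -> plabel -> proc -> Prop :=
| st_act a k X : nokeys X -> fstep (Pref a X) (Base a k) (Keyed a k X)
| st_pre a k X th X' : fstep X th X' -> lab_key th <> k ->
    fstep (Keyed a k X) th (Keyed a k X')
| st_res l X th X' : fstep X th X' -> lab_act th <> Vis l ->
    lab_act th <> Vis (co l) -> fstep (Res X l) th (Res X' l)
| st_parL X Y th X' : fstep X th X' -> ~ haskey (lab_key th) Y ->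
    fstep (Par X Y) (PPar SL th) (Par X' Y)
| st_parR X Y th X' : fstep X th X' -> ~ haskey (lab_key th) Y ->
    fstep (Par Y X) (PPar SR th) (Par Y X')
| st_syn X Y X' Y' l th1 th2 : fstep X th1 X' -> fstep Y th2 Y' ->
    simple th1 -> simple th2 -> lab_act th1 = Vis l -> lab_act th2 = Vis (co l) ->
    lab_key th1 = lab_key th2 ->
    fstep (Par X Y) (Syn th1 th2) (Par X' Y')
| st_sumL X Y th X' : fstep X th X' -> nokeys Y ->
    fstep (Sum X Y) (PSum SL th) (Sum X' Y)
| st_sumR X Y th X' : fstep X th X' -> nokeys Y ->
    fstep (Sum Y X) (PSum SR th) (Sum Y X').

Inductive conn : plabel -> plabel -> Prop :=
| cn_A1 a k th : conn (Base a k) th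
| cn_A2 th a k : ~ is_prefix th -> conn th (Base a k)
| cn_P1 D th th' : conn th th' -> conn (PPar D th) (PPar D th')
| cn_P2 D th th' : conn (PPar D th) (PPar (flip D) th')
| cn_C1 D th th' : conn th th' -> conn (PSum D th) (PSum D th')
| cn_C2 D th th' : conn (PSum D th) (PSum (flip D) th')
| cn_S1 D th thL thR : conn th (comp D thL thR) -> conn (PPar D th) (Syn thL thR)
| cn_S2 D th thL thR : conn (comp D thL thR) th -> conn (Syn thL thR) (PPar D th)
| cn_S3 thL thR thL' thR' : conn thL thL' -> conn thR thR' ->
    conn (Syn thL thR) (Syn thL' thR').

Inductive dep : plabel -> plabel -> Prop :=
| dp_A1 a k th : dep (Base a k) th
| dp_A2 th a k : ~ is_prefix th -> dep th (Base a k)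
| dp_P1 D th th' : dep th th' -> dep (PPar D th) (PPar D th')
| dp_P2k D th th' : lab_key th = lab_key th' -> dep (PPar D th) (PPar (flip D) th')
| dp_C1 D th th' : dep th th' -> dep (PSum D th) (PSum D th')
| dp_C2 D th th' : dep (PSum D th) (PSum (flip D) th')
| dp_S1 D th thL thR : dep th (comp D thL thR) -> dep (PPar D th) (Syn thL thR)
| dp_S2 D th thL thR : dep (comp D thL thR) th -> dep (Syn thL thR) (PPar D th)
| dp_S3 thL thR thL' thR' :
    (dep thL thL' /\ conn thR thR') \/ (dep thR thR' /\ conn thL thL') ->
    dep (Syn thL thR) (Syn thL' thR').

Inductive ind : plabel -> plabel -> Prop :=
| in_P1 D th th' : ind th th' -> ind (PPar D th) (PPar D th')
| in_P2k D th th' : lab_key th <> lab_key th' -> ind (PPar D th) (PPar (flip D) th')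
| in_C1 D th th' : ind th th' -> ind (PSum D th) (PSum D th')
| in_S1 D th thL thR : ind th (comp D thL thR) -> ind (PPar D th) (Syn thL thR)
| in_S2 D th thL thR : ind (comp D thL thR) th -> ind (Syn thL thR) (PPar D th)
| in_S3 thL thR thL' thR' : ind thL thL' -> ind thR thR' ->
    ind (Syn thL thR) (Syn thL' thR').

Record trans : Type := Tr { src : proc; fwd : bool; lab : plabel; tgt : proc }.
Definition valid (t : trans) : Prop :=
  if fwd t then fstep (src t) (lab t) (tgt t) else fstep (tgt t) (lab t) (src t).
Definition inv (t : trans) : trans := Tr (tgt t) (negb (fwd t)) (lab t) (src t).

Inductive vpath : proc -> list trans -> proc -> Prop :=
| vp_nil P : vpath P [] P
| vp_cons t r Q : valid t -> vpath (tgt t) r Q -> vpath (src t) (t :: r) Q.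

(** Only processes reachable from standard ones are considered. *)
Definition reachable (P : proc) : Prop :=
  exists S r, standard S /\ vpath S r P.
Definition is_transition (t : trans) : Prop := valid t /\ reachable (src t).

Definition no_back (P : proc) : Prop := ~ exists th Q, fstep Q th P.
Definition rooted_path (r : list trans) : Prop :=
  exists P Q, reachable P /\ no_back P /\ vpath P r Q.

Definition connected (t u : trans) : Prop := exists r, vpath (src t) r (tgt u).
Definition tind (t u : trans) : Prop := connected t u /\ ind (lab t) (lab u).

Inductive evsim : trans -> trans -> Prop :=
| es_refl t : is_transition t -> evsim t t
| es_sym t t' : evsim t t' -> evsim t' t
| es_trans t t' t'' : evsim t t' -> evsim t' t'' -> evsim t t''
| es_sq t u u' t' :
    is_transition t -> is_transition u -> is_transition u' -> is_transition t' ->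
    src u = src t -> src u' = tgt t -> src t' = tgt u -> tgt t' = tgt u' ->
    lab u' = lab u -> fwd u' = fwd u -> lab t' = lab t -> fwd t' = fwd t ->
    tind t u -> evsim t t'.

Definition ev (t : trans) : trans -> Prop := evsim t.

(** #(r, e), where eb is the inverse event of e *)
Fixpoint sharp (e eb : trans -> Prop) (r : list trans) : Z :=
  match r with
  | [] => 0
  | t :: r' =>
      if excluded_middle_informative (e t) then sharp e eb r' + 1
      else if excluded_middle_informative (eb t) then sharp e eb r' - 1
      else sharp e eb r'
  end.

(** causality on forward events [t1], [t2] (inverse event of [t] is [inv t]) *)
Definition ev_le (t1 t2 : trans) : Prop :=
  forall r, rooted_path r ->
    sharp (ev t2) (ev (inv t2)) r > 0 -> sharp (ev t1) (ev (inv t1)) r > 0.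
Definition ev_lt (t1 t2 : trans) : Prop :=
  ev_le t1 t2 /\ ~ (forall x, ev t1 x <-> ev t2 x).

Definition ev_composable (e1 e2 : trans -> Prop) : Prop :=
  exists u1 u2, e1 u1 /\ e2 u2 /\ tgt u1 = src u2.
Definition ev_dep (e1 e2 : trans -> Prop) : Prop :=
  exists u1 u2, e1 u1 /\ e2 u2 /\ dep (lab u1) (lab u2).

(* Call a forward event e "occurred at X" when some transition of e reaches X by
   forward steps.  Along any path, #(r, e) telescopes to the difference of this
   occurrence indicator at the two ends: a transition of e switches it on, one
   of its inverse switches it off, and any other transition leaves it unchanged,
   because a history containing e can be unwound past a step outside e with the
   reverse diamond (keys make CCSK histories backward deterministic).  Nothing
   has occurred at a root, so e1 <= e2 says: wherever e2 has occurred, e1 has.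
   If the labels are dependent, the commuting squares that generate e2 are made
   of transitions independent of, hence outside, e1 and its inverse, so they
   preserve the occurrence of e1 at their sources; as e1 has occurred at the
   source of the member of e2 composable with it, it has occurred wherever e2
   has.  If they are independent, the forward diamond runs e2 before e1,
   reaching a state where e2 has occurred but e1 has not. *)

From Stdlib Require Import ZArith List ClassicalEpsilon Classical Lia Relations.
Import ListNotations.

Lemma fstep_key_new X th X' : fstep X th X' -> haskey (lab_key th) X'.
Proof. induction 1; simpl in *; auto. Qed.

Lemma fstep_target_keyed X th X' : fstep X th X' -> ~ nokeys X'.
Proof. intros h n. exact (n _ (fstep_key_new _ _ _ h)). Qed.

Lemma fstep_key_fresh X th X' : fstep X th X' -> ~ haskey (lab_key th) X.
Proof.
  induction 1; simpl in *; unfold nokeys in *; firstorder.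
  match goal with e : lab_key _ = lab_key _ |- _ => rewrite e in IHfstep1 |- * end; tauto.
Qed.

Lemma fstep_keys_mono X th X' k : fstep X th X' -> haskey k X -> haskey k X'.
Proof. induction 1; simpl in *; unfold nokeys in *; firstorder. Qed.

Lemma fstep_keys_back X th X' k :
  fstep X th X' -> haskey k X' -> k = lab_key th \/ haskey k X.
Proof.
  induction 1; simpl in *; unfold nokeys in *; firstorder.
  left; congruence.
Qed.

Lemma fstep_key_absent X th X' k :
  fstep X th X' -> ~ haskey k X -> k <> lab_key th -> ~ haskey k X'.
Proof. intros h n d h'. destruct (fstep_keys_back _ _ _ _ h h'); tauto. Qed.

Lemma fstep_seq_keys_differ X a X' b X'' :
  fstep X a X' -> fstep X' b X'' -> lab_key a <> lab_key b.
Proof.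
  intros h1 h2 e. apply (fstep_key_fresh _ _ _ h2). rewrite <- e.
  exact (fstep_key_new _ _ _ h1).
Qed.

Ltac keyed_target_contra :=
  match goal with
  | h : fstep _ _ ?Z, n : nokeys ?Z |- _ => exfalso; exact (fstep_target_keyed _ _ _ h n)
  end.

Lemma fstep_back_det X1 a Y X2 b :
  fstep X1 a Y -> fstep X2 b Y -> lab_key a = lab_key b -> a = b /\ X1 = X2.
Proof.
  intros h; revert X2 b; induction h; intros X2 b hb e; inversion hb; subst; simpl in *;
    try keyed_target_contra.
  all: try (split; reflexivity).
  all: try (exfalso; match goal with
    | h : fstep _ _ ?Z, n : ~ haskey _ ?Z |- _ =>
        apply n; pose proof (fstep_key_new _ _ _ h); congruence end).
  all: try (destruct (IHh _ _ ltac:(eassumption) e); subst; split; reflexivity).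
  destruct (IHh1 _ _ ltac:(eassumption) e), (IHh2 _ _ ltac:(eassumption) ltac:(congruence)).
  subst; split; reflexivity.
Qed.

Ltac absent_by_mono :=
  let h := fresh in intro h;
  match goal with n : ~ haskey _ _ |- _ =>
    apply n; eapply fstep_keys_mono; eassumption end.

Lemma fstep_back_diamond Z1 a Y Z2 b :
  fstep Z1 a Y -> fstep Z2 b Y -> lab_key a <> lab_key b ->
  exists Z0, fstep Z0 b Z1 /\ fstep Z0 a Z2 /\ ind a b.
Proof.
  intros h; revert Z2 b; induction h; intros Z2 b hb e; inversion hb; subst; simpl in *;
    try keyed_target_contra; try congruence.
  - destruct (IHh _ _ ltac:(eassumption) e) as (Z0 & s1 & s2 & hi).
    exists (Keyed a k Z0); repeat split; auto; constructor; auto.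
  - destruct (IHh _ _ ltac:(eassumption) e) as (Z0 & s1 & s2 & hi).
    exists (Res Z0 l); repeat split; auto; constructor; auto.
  - destruct (IHh _ _ ltac:(eassumption) e) as (Z0 & s1 & s2 & hi).
    exists (Par Z0 Y); repeat split; constructor; auto.
  - exists (Par X X0); repeat split; constructor; auto; absent_by_mono.
  - destruct (IHh _ _ ltac:(eassumption) e) as (Z0 & s1 & s2 & hi).
    exists (Par Z0 Y0); repeat split.
    + econstructor; eauto.
    + constructor; auto. absent_by_mono.
    + apply (in_S1 SL); auto.
  - exists (Par X0 X); repeat split; constructor; auto; absent_by_mono.
  - destruct (IHh _ _ ltac:(eassumption) e) as (Z0 & s1 & s2 & hi).
    exists (Par Y Z0); repeat split; constructor; auto.
  - destruct (IHh _ _ ltac:(eassumption) ltac:(congruence)) as (Z0 & s1 & s2 & hi).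
    exists (Par X0 Z0); repeat split.
    + econstructor; eauto.
    + constructor; auto. absent_by_mono.
    + apply (in_S1 SR); auto.
  - destruct (IHh1 _ _ ltac:(eassumption) e) as (Z0 & s1 & s2 & hi).
    exists (Par Z0 Y); repeat split.
    + constructor; auto. absent_by_mono.
    + econstructor; eauto.
    + apply (in_S2 SL); auto.
  - destruct (IHh2 _ _ ltac:(eassumption) ltac:(congruence)) as (Z0 & s1 & s2 & hi).
    exists (Par X Z0); repeat split.
    + constructor; auto. absent_by_mono.
    + econstructor; eauto.
    + apply (in_S2 SR); auto.
  - destruct (IHh1 _ _ ltac:(eassumption) e) as (Z0 & s1 & s2 & hi).
    destruct (IHh2 _ _ ltac:(eassumption) ltac:(congruence)) as (Z0' & s1' & s2' & hi').
    exists (Par Z0 Z0'); repeat split; [econstructor; eauto | econstructor; eauto | constructor; auto].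
  - destruct (IHh _ _ ltac:(eassumption) e) as (Z0 & s1 & s2 & hi).
    exists (Sum Z0 Y); repeat split; constructor; auto.
  - destruct (IHh _ _ ltac:(eassumption) e) as (Z0 & s1 & s2 & hi).
    exists (Sum Y Z0); repeat split; constructor; auto.
Qed.

Lemma fstep_seq_conn P a Q b S : fstep P a Q -> fstep Q b S -> conn a b.
Proof.
  intros h; revert b S; induction h; intros b S hb; inversion hb; subst; simpl in *;
    try keyed_target_contra; try constructor; eauto.
  all: try apply (cn_P2 SL); try apply (cn_P2 SR).
  all: try (apply (cn_S1 SL); simpl; eauto); try (apply (cn_S1 SR); simpl; eauto).
  all: try (apply (cn_S2 SL); simpl; eauto); try (apply (cn_S2 SR); simpl; eauto).
Qed.

Ltac seq_keys_differ :=
  match goal with h1 : fstep _ ?a ?B, h2 : fstep ?B ?b _ |- lab_key ?a <> lab_key ?b =>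
    exact (fstep_seq_keys_differ _ _ _ _ _ h1 h2) end.

Ltac seq_conn :=
  match goal with h1 : fstep _ ?a ?B, h2 : fstep ?B ?b _ |- conn ?a ?b =>
    exact (fstep_seq_conn _ _ _ _ _ h1 h2) end.

Lemma fstep_forward_diamond P a Q b S :
  fstep P a Q -> fstep Q b S -> ~ dep a b ->
  exists R, fstep P b R /\ fstep R a S /\ ind a b.
Proof.
  intros h; revert b S; induction h; intros b S hb nd; inversion hb; subst; simpl in *;
    try keyed_target_contra; try (exfalso; apply nd; constructor; fail).
  - destruct (IHh _ _ ltac:(eassumption) nd) as (R & s1 & s2 & hi).
    exists (Keyed a k R); repeat split; auto; constructor; auto.
  - destruct (IHh _ _ ltac:(eassumption) nd) as (R & s1 & s2 & hi).
    exists (Res R l); repeat split; auto; constructor; auto.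
  - edestruct IHh as (R & s1 & s2 & hi);
      [eassumption | intro; apply nd; constructor; assumption |].
    exists (Par R Y); repeat split; constructor; auto.
  - pose proof (fstep_seq_keys_differ _ _ _ _ _ (st_parL _ _ _ _ h ltac:(eassumption)) hb) as kd.
    eexists; repeat split.
    + apply st_parR; [eassumption | absent_by_mono].
    + apply st_parL; [assumption | eapply fstep_key_absent; eauto].
    + apply (in_P2k SL); auto.
  - edestruct IHh as (R & s1 & s2 & hi);
      [eassumption | intro; apply nd; apply (dp_S1 SL); assumption |].
    eexists; repeat split.
    + eapply st_syn; eauto.
    + constructor; auto. eapply fstep_key_absent; eauto.
      assert (lab_key th <> lab_key th1) by seq_keys_differ; congruence.
    + apply (in_S1 SL); auto.
  - pose proof (fstep_seq_keys_differ _ _ _ _ _ (st_parR _ _ _ _ h ltac:(eassumption)) hb) as kd.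
    eexists; repeat split.
    + apply st_parL; [eassumption | absent_by_mono].
    + apply st_parR; [assumption | eapply fstep_key_absent; eauto].
    + apply (in_P2k SR); auto.
  - edestruct IHh as (R & s1 & s2 & hi);
      [eassumption | intro; apply nd; constructor; assumption |].
    exists (Par Y R); repeat split; constructor; auto.
  - edestruct IHh as (R & s1 & s2 & hi);
      [eassumption | intro; apply nd; apply (dp_S1 SR); assumption |].
    eexists; repeat split.
    + eapply st_syn; eauto.
    + constructor; auto. eapply fstep_key_absent; eauto.
      assert (lab_key th <> lab_key th2) by seq_keys_differ; congruence.
    + apply (in_S1 SR); auto.
  - edestruct IHh1 as (R & s1 & s2 & hi);
      [eassumption | intro; apply nd; apply (dp_S2 SL); assumption |].
    exists (Par R Y); repeat split.
    + constructor; auto. absent_by_mono.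
    + econstructor; eauto.
    + apply (in_S2 SL); auto.
  - edestruct IHh2 as (R & s1 & s2 & hi);
      [eassumption | intro; apply nd; apply (dp_S2 SR); assumption |].
    exists (Par X R); repeat split.
    + constructor; auto. absent_by_mono.
    + econstructor; eauto.
    + apply (in_S2 SR); auto.
  - edestruct IHh1 as (R & s1 & s2 & hi);
      [eassumption | intro; apply nd, dp_S3; left; split; [assumption | seq_conn] |].
    edestruct IHh2 as (R' & s1' & s2' & hi');
      [eassumption | intro; apply nd, dp_S3; right; split; [assumption | seq_conn] |].
    exists (Par R R'); repeat split; [econstructor; eauto | econstructor; eauto | constructor; auto].
  - edestruct IHh as (R & s1 & s2 & hi);
      [eassumption | intro; apply nd; constructor; assumption |].
    exists (Sum R Y); repeat split; constructor; auto.
  - edestruct IHh as (R & s1 & s2 & hi);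
      [eassumption | intro; apply nd; constructor; assumption |].
    exists (Sum Y R); repeat split; constructor; auto.
Qed.

Lemma ind_sym a b : ind a b -> ind b a.
Proof.
  induction 1; try (constructor; auto; fail).
  destruct D; [apply (in_P2k SR) | apply (in_P2k SL)]; auto.
Qed.

Lemma dep_not_ind a b : dep a b -> ~ ind a b.
Proof.
  revert b; induction a; intros b hd hi; inversion hd; subst; inversion hi; subst;
    simpl in *; try (destruct D; discriminate); try congruence;
    try (eapply IHa; eassumption).
  - destruct D; simpl in *; eapply IHa2 + eapply IHa1; eassumption.
  - match goal with h : _ \/ _ |- _ => destruct h as [[] | []] end;
      [eapply IHa1 | eapply IHa2]; eassumption.
Qed.

Lemma vpath_snoc A r B t :
  vpath A r B -> valid t -> src t = B -> vpath A (r ++ [t]) (tgt t).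
Proof.
  induction 1; intros hv hs; simpl; subst; repeat constructor; auto.
Qed.

Lemma reachable_tgt t : reachable (src t) -> valid t -> reachable (tgt t).
Proof.
  intros (S & r & hs & hp) hv.
  exists S, (r ++ [t]); split; auto. apply (vpath_snoc _ _ _ _ hp); auto.
Qed.

Lemma reachable_fstep X th Y : reachable X -> fstep X th Y -> reachable Y.
Proof. intros; apply (reachable_tgt (Tr X true th Y)); auto. Qed.

Lemma reachable_fstep_src X th Y : reachable Y -> fstep X th Y -> reachable X.
Proof. intros; apply (reachable_tgt (Tr Y false th X)); auto. Qed.

Lemma standard_reachable S : standard S -> reachable S.
Proof. intros hs; exists S, []; split; auto; constructor. Qed.

Lemma standard_no_back S : standard S -> no_back S.
Proof. intros hs (th & Q & hq). exact (fstep_target_keyed _ _ _ hq hs). Qed.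

Lemma inv_inv t : inv (inv t) = t.
Proof. destruct t as [s [] l g]; reflexivity. Qed.

Lemma is_transition_inv t : is_transition t -> is_transition (inv t).
Proof.
  intros [hv hr]; split.
  - destruct t as [s [] l g]; exact hv.
  - apply reachable_tgt; auto.
Qed.

Lemma evsim_is_transition_lab_fwd a b : evsim a b ->
  is_transition a /\ is_transition b /\ lab a = lab b /\ fwd a = fwd b.
Proof. induction 1; intuition congruence. Qed.

Lemma evsim_inv a b : evsim a b -> evsim (inv a) (inv b).
Proof.
  induction 1 as [| | | t u u' t' ht hu hu' ht' e1 e2 e3 e4 e5 e6 e7 e8 [_ hi]].
  - apply es_refl, is_transition_inv; auto.
  - apply es_sym; auto.
  - eapply es_trans; eauto.
  - apply (es_sq (inv t) u' u (inv t')); try apply is_transition_inv; auto; simpl;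
      try congruence.
    split.
    + exists [u']. simpl. rewrite <- e2. constructor; [apply hu' | constructor].
    + simpl; rewrite e5; exact hi.
Qed.

Lemma evsim_fsquare P Q R S a b :
  reachable P -> fstep P a Q -> fstep P b R -> fstep Q b S -> fstep R a S -> ind a b ->
  evsim (Tr P true a Q) (Tr R true a S).
Proof.
  intros hr hPQ hPR hQS hRS hi.
  apply (es_sq _ (Tr P true b R) (Tr Q true b S)); simpl; auto;
    repeat split; simpl; eauto using reachable_fstep.
  exists [Tr P true b R]. apply (vp_cons (Tr P true b R)); [exact hPR | constructor].
Qed.

Lemma ev_fwd_member t w : fwd t = true -> ev t w ->
  is_transition w /\ fwd w = true /\ lab w = lab t /\ fstep (src w) (lab t) (tgt w).
Proof.
  intros ft h. destruct (evsim_is_transition_lab_fwd _ _ h) as (_ & hw & hl & hf).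
  assert (fw : fwd w = true) by congruence.
  split; [exact hw |]. split; [exact fw |]. split; [congruence |].
  destruct hw as [hv _]. unfold valid in hv. rewrite fw, <- hl in hv. exact hv.
Qed.

Definition fsteps : proc -> proc -> Prop :=
  clos_refl_trans_n1 proc (fun X Y => exists th, fstep X th Y).

Lemma fsteps_keys_mono X Y k : fsteps X Y -> haskey k X -> haskey k Y.
Proof. induction 1 as [| Y Z [th h]]; eauto using fstep_keys_mono. Qed.

Definition occurred (t : trans) (X : proc) : Prop :=
  exists w, ev t w /\ fsteps (tgt w) X.

Definition occ_count (t : trans) (X : proc) : Z :=
  if excluded_middle_informative (occurred t X) then 1 else 0.

Lemma occ_count_occurred t X : occurred t X -> occ_count t X = 1.
Proof. unfold occ_count; destruct excluded_middle_informative; tauto. Qed.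

Lemma occ_count_not_occurred t X : ~ occurred t X -> occ_count t X = 0.
Proof. unfold occ_count; destruct excluded_middle_informative; tauto. Qed.

Section Occurrence.

Variable t : trans.
Hypothesis t_fwd : fwd t = true.

Lemma occurred_haskey X : occurred t X -> haskey (lab_key (lab t)) X.
Proof.
  intros (w & hw & hX). destruct (ev_fwd_member _ _ t_fwd hw) as (_ & _ & _ & sw).
  eauto using fsteps_keys_mono, fstep_key_new.
Qed.

Lemma occurred_fstep X th Y : occurred t X -> fstep X th Y -> occurred t Y.
Proof. intros (w & hw & hX) h. exists w; split; auto. econstructor; eauto. Qed.

Lemma occurred_fsteps X Y : occurred t X -> fsteps X Y -> occurred t Y.
Proof. intros hX; induction 1 as [| Y Z [th h]]; eauto using occurred_fstep. Qed.

Lemma occurred_fstep_back X th Y :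
  occurred t Y -> fstep X th Y -> reachable X -> ~ ev t (Tr X true th Y) -> occurred t X.
Proof.
  intros (w & hw & hY). destruct (ev_fwd_member _ _ t_fwd hw) as (_ & fw & lw & sw).
  revert X th; induction hY as [| Y' Y [sg hs] hY IH]; intros X th hX hr hn.
  - destruct (PeanoNat.Nat.eq_dec (lab_key (lab t)) (lab_key th)) as [e | e].
    + exfalso; apply hn.
      destruct (fstep_back_det _ _ _ _ _ sw hX e) as [<- <-].
      destruct w as [s f l g]; simpl in *; subst; exact hw.
    + destruct (fstep_back_diamond _ _ _ _ _ sw hX e) as (Z0 & s1 & s2 & hi).
      exists (Tr Z0 true (lab t) X); split; [| constructor].
      eapply es_trans; [exact hw | apply es_sym].
      destruct w as [s f l g]; simpl in *; subst.
      eapply evsim_fsquare; eauto using reachable_fstep_src.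
  - destruct (PeanoNat.Nat.eq_dec (lab_key sg) (lab_key th)) as [e | e].
    + destruct (fstep_back_det _ _ _ _ _ hs hX e) as [-> <-].
      exists w; auto.
    + destruct (fstep_back_diamond _ _ _ _ _ hs hX e) as (Z0 & s1 & s2 & hi).
      apply (occurred_fstep Z0 sg); auto.
      apply (IH Z0 th); eauto using reachable_fstep_src.
      intro hZ. apply hn. eapply es_trans; [exact hZ |].
      apply (evsim_fsquare _ _ _ _ _ sg); eauto using reachable_fstep_src, ind_sym.
Qed.

Lemma ev_occurred v : ev t v -> occurred t (tgt v) /\ ~ occurred t (src v).
Proof.
  intros hv. destruct (ev_fwd_member _ _ t_fwd hv) as (_ & _ & _ & sv).
  split.
  - exists v; split; auto. constructor.
  - intro h. exact (fstep_key_fresh _ _ _ sv (occurred_haskey _ h)).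
Qed.

Lemma ev_inv_occurred v : ev (inv t) v -> occurred t (src v) /\ ~ occurred t (tgt v).
Proof.
  intros hv. apply evsim_inv in hv. rewrite inv_inv in hv.
  exact (ev_occurred _ hv).
Qed.

Lemma occurred_other_transition v : is_transition v -> ~ ev t v -> ~ ev (inv t) v ->
  (occurred t (src v) <-> occurred t (tgt v)).
Proof.
  intros [hv hr] n1 n2. destruct v as [s [] l g]; unfold valid in hv; simpl in *.
  - split; [intro h; eapply occurred_fstep; eauto |].
    intro h; eapply occurred_fstep_back; eauto.
  - split; [| intro h; eapply occurred_fstep; eauto].
    intro h; eapply occurred_fstep_back; eauto.
    + apply (reachable_fstep_src _ _ _ hr hv).
    + intro hg. apply n2. exact (evsim_inv _ _ hg).
Qed.

Lemma sharp_occ_count A r B : vpath A r B -> reachable A ->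
  sharp (ev t) (ev (inv t)) r = occ_count t B - occ_count t A.
Proof.
  induction 1 as [| v r B hv hp IH]; intros hr; simpl; [lia |].
  rewrite (IH (reachable_tgt _ hr hv)).
  destruct excluded_middle_informative as [h | h].
  - destruct (ev_occurred _ h) as [h1 h0].
    rewrite (occ_count_occurred _ _ h1), (occ_count_not_occurred _ _ h0); lia.
  - destruct excluded_middle_informative as [h' | h'].
    + destruct (ev_inv_occurred _ h') as [h1 h0].
      rewrite (occ_count_occurred _ _ h1), (occ_count_not_occurred _ _ h0); lia.
    + pose proof (occurred_other_transition v (conj hv hr) h h') as e.
      destruct (classic (occurred t (src v))) as [h1 | h0].
      * rewrite (occ_count_occurred _ _ h1), (occ_count_occurred _ _ (proj1 e h1)); lia.
      * assert (h0' : ~ occurred t (tgt v)) by tauto.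
        rewrite (occ_count_not_occurred _ _ h0), (occ_count_not_occurred _ _ h0'); lia.
Qed.

Lemma no_back_not_occurred P : no_back P -> ~ occurred t P.
Proof.
  intros nb (w & hw & hP). apply nb.
  destruct (ev_fwd_member _ _ t_fwd hw) as (_ & _ & _ & sw).
  destruct hP as [| Y Z [th h]]; do 2 eexists; eauto.
Qed.

Lemma sharp_rooted_pos P r Q : reachable P -> no_back P -> vpath P r Q ->
  (sharp (ev t) (ev (inv t)) r > 0 <-> occurred t Q).
Proof.
  intros hr nb hp.
  rewrite (sharp_occ_count _ _ _ hp hr), (occ_count_not_occurred _ _ (no_back_not_occurred _ nb)).
  destruct (classic (occurred t Q)) as [h | h].
  - rewrite (occ_count_occurred _ _ h); split; auto; lia.
  - rewrite (occ_count_not_occurred _ _ h); split; [lia | tauto].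
Qed.

Lemma occurred_src_evsim a b : evsim a b -> dep (lab t) (lab a) ->
  (occurred t (src a) <-> occurred t (src b)).
Proof.
  induction 1 as [x | x y hxy IH | x y z hxy IH1 hyz IH2
                 | x u u' x' _ hu _ _ e1 _ e3 _ _ _ _ _ [_ hi]]; intros hd.
  - tauto.
  - destruct (evsim_is_transition_lab_fwd _ _ hxy) as (_ & _ & el & _).
    symmetry; apply IH; congruence.
  - destruct (evsim_is_transition_lab_fwd _ _ hxy) as (_ & _ & el & _).
    rewrite IH1 by exact hd. apply IH2; congruence.
  - assert (lu : lab u <> lab t).
    { intro el. rewrite el in hi. exact (dep_not_ind _ _ hd (ind_sym _ _ hi)). }
    rewrite <- e1, e3. apply occurred_other_transition; auto.
    + intro h. apply lu. destruct (ev_fwd_member _ _ t_fwd h) as (_ & _ & l & _); exact l.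
    + intro h. apply lu.
      destruct (evsim_is_transition_lab_fwd _ _ h) as (_ & _ & l & _); simpl in l; congruence.
Qed.

End Occurrence.

Lemma ev_dep_fwd_iff t1 t2 : is_transition t1 -> fwd t1 = true ->
  is_transition t2 -> fwd t2 = true ->
  (ev_dep (ev t1) (ev t2) <-> dep (lab t1) (lab t2)).
Proof.
  intros ht1 f1 ht2 f2. split.
  - intros (a & b & ha & hb & hd).
    destruct (ev_fwd_member _ _ f1 ha) as (_ & _ & la & _).
    destruct (ev_fwd_member _ _ f2 hb) as (_ & _ & lb & _).
    rewrite la, lb in hd; exact hd.
  - intros hd. exists t1, t2. split; [| split]; auto; apply es_refl; auto.
Qed.

Lemma ev_le_occurred_iff t1 t2 : fwd t1 = true -> fwd t2 = true ->
  (ev_le t1 t2 <-> forall P r Q, reachable P -> no_back P -> vpath P r Q ->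
                   occurred t2 Q -> occurred t1 Q).
Proof.
  intros f1 f2. split.
  - intros hle P r Q hr nb hp h2.
    apply (sharp_rooted_pos _ f1 _ _ _ hr nb hp), hle; [exists P, Q; auto |].
    apply (sharp_rooted_pos _ f2 _ _ _ hr nb hp), h2.
  - intros h r (P & Q & hr & nb & hp) h2.
    apply (sharp_rooted_pos _ f1 _ _ _ hr nb hp), (h P r Q hr nb hp).
    apply (sharp_rooted_pos _ f2 _ _ _ hr nb hp), h2.
Qed.

Section ComposableEvents.

Variables t1 t2 u1 u2 : trans.
Hypotheses (f1 : fwd t1 = true) (f2 : fwd t2 = true).
Hypotheses (hu1 : ev t1 u1) (hu2 : ev t2 u2) (composable : tgt u1 = src u2).

Lemma dep_ev_le : dep (lab t1) (lab t2) -> ev_le t1 t2.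
Proof.
  intros hd. apply ev_le_occurred_iff; auto. intros P r Q _ _ _ (w & hw & hQ).
  destruct (ev_fwd_member _ _ f2 hu2) as (_ & _ & lu2 & _).
  destruct (ev_fwd_member _ _ f2 hw) as (_ & _ & _ & sw).
  assert (h1 : occurred t1 (src u2)) by (exists u1; rewrite composable; split; [exact hu1 | constructor]).
  assert (e : evsim u2 w) by (eapply es_trans; [apply es_sym; exact hu2 | exact hw]).
  apply (occurred_src_evsim _ f1 _ _ e) in h1; [| rewrite lu2; exact hd].
  eauto using occurred_fsteps, occurred_fstep.
Qed.

Lemma composable_keys_differ : lab_key (lab t1) <> lab_key (lab t2).
Proof.
  destruct (ev_fwd_member _ _ f1 hu1) as (_ & _ & _ & s1).
  destruct (ev_fwd_member _ _ f2 hu2) as (_ & _ & _ & s2).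
  rewrite <- composable in s2. exact (fstep_seq_keys_differ _ _ _ _ _ s1 s2).
Qed.

Lemma ev_le_dep : ev_le t1 t2 -> dep (lab t1) (lab t2).
Proof.
  intros hle. apply NNPP; intro nd.
  destruct (ev_fwd_member _ _ f1 hu1) as ([_ hr1] & _ & _ & s1).
  destruct (ev_fwd_member _ _ f2 hu2) as (_ & fu2 & lu2 & s2).
  rewrite <- composable in s2.
  destruct (fstep_forward_diamond _ _ _ _ _ s1 s2 nd) as (R & sR & sR' & hi).
  set (v := Tr (src u1) true (lab t2) R).
  assert (hv : ev t2 v).
  { eapply es_trans; [exact hu2 | apply es_sym].
    destruct u2 as [s f l g]; simpl in *; subst.
    apply (evsim_fsquare _ _ _ _ _ (lab t1)); auto using ind_sym. }
  destruct hr1 as (S0 & r0 & hs & hp).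
  assert (hR : occurred t1 R).
  { apply (proj1 (ev_le_occurred_iff _ _ f1 f2) hle S0 (r0 ++ [v]) R).
    - exact (standard_reachable _ hs).
    - exact (standard_no_back _ hs).
    - exact (vpath_snoc _ _ _ v hp sR eq_refl).
    - exact (proj1 (ev_occurred _ f2 _ hv)). }
  destruct (fstep_keys_back _ _ _ _ sR (occurred_haskey _ f1 _ hR)) as [e | e].
  - exact (composable_keys_differ e).
  - exact (fstep_key_fresh _ _ _ s1 e).
Qed.

Lemma composable_ev_neq : is_transition t2 -> ~ (forall x, ev t1 x <-> ev t2 x).
Proof.
  intros ht2 same.
  destruct (ev_fwd_member _ _ f1 (proj2 (same t2) (es_refl _ ht2))) as (_ & _ & l & _).
  apply composable_keys_differ. rewrite l; reflexivity.
Qed.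

End ComposableEvents.

Theorem lemma7p2 (t1 t2 : trans) :
  is_transition t1 -> fwd t1 = true ->
  is_transition t2 -> fwd t2 = true ->
  ev_composable (ev t1) (ev t2) ->
  (ev_lt t1 t2 <-> ev_dep (ev t1) (ev t2)).
Proof.
  intros ht1 f1 ht2 f2 (u1 & u2 & hu1 & hu2 & composable).
  rewrite ev_dep_fwd_iff by assumption.
  split.
  - intros [hle _]. exact (ev_le_dep _ _ _ _ f1 f2 hu1 hu2 composable hle).
  - intros hd. split.
    + exact (dep_ev_le _ _ _ _ f1 f2 hu1 hu2 composable hd).
    + exact (composable_ev_neq _ _ _ _ f1 f2 hu1 hu2 composable ht2).
Qed.
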